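(* For every category $\mathcal A$ and every $n\ge1$ there are equivalences of categories $\Psi_1\cong\Sigma_*$, $\Psi_1\wr\mathcal A\cong\Sigma_*\wr\mathcal A$, $\Psi_n\cong\Sigma_*^{\wr n}$ and $\Psi_n\wr\mathcal A\cong\Sigma_*^{\wr n}\wr\mathcal A$.
   Context: A tree is a nonempty, connected, acyclic finite graph whose vertices are partitioned into a root vertex of valence 1, a (possibly empty) set of leaf vertices of valence 1, and interior vertices (all other vertices, of arbitrary valence, possibly 1); each tree is required to have at least one interior vertex. Tree isomorphisms are isomorphisms of vertex and edge sets preserving the root and the leaves. Edges are oriented towards the root; $\mathrm{In}(v)$ is the set of incoming edges at $v$. The height of a vertex is the number of vertices strictly between it and the root (the vertex adjacent to the root has height 0, the root height $-1$). A level $n$ tree is a tree all of whose leaves have height $n$ and all of whose interior vertices have height $<n$. A labeled level tree is a level tree together with bijections $l_v:S_v\to\mathrm{In}(v)$ from finite sets, for every vertex $v$. $\Psi_n$ is the category of labeled level $n$ trees with tree isomorphisms as morphisms. For a category $\mathcal A$, $\Psi_n\wr\mathcal A$ is the category of labeled level $n$ trees whose leaves are decorated by objects of $\mathcal A$, with morphisms tree isomorphisms together with $\mathcal A$-morphisms between leaf decorations compatible with the induced bijection of leaves. $\Sigma_*$ is the category of finite sets and bijections; for $n\ge1$, $\Sigma_*^{\wr n}$ is the category whose objects are chains of functions of finite sets $S_1\leftarrow S_2\leftarrow\cdots\leftarrow S_n$ and whose morphisms are families of bijections $S_k\to S_k'$ commuting with the maps. $\Sigma_*\wr\mathcal A$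 is the category whose objects are families $\{A_s\}_{s\in S}$ of objects of $\mathcal A$ indexed by a finite set $S$, with morphisms a bijection $\sigma:T\to S$ plus morphisms $A_t\to B_{\sigma(t)}$. $\Sigma_*^{\wr n}\wr\mathcal A$ has objects pairs $(F,\{A_s\}_{s\in S_n})$ with $F=(S_1\leftarrow\cdots\leftarrow S_n)\in\Sigma_*^{\wr n}$ and $A_s\in\mathcal A$ indexed by the top set $S_n$, and morphisms a natural isomorphism $\Phi:F\to G$ plus morphisms $A_s\to B_{\Phi_n(s)}$. *)

From HB Require Import structures.
From mathcomp Require Import all_boot.

Set Implicit Arguments.

Unset Printing Implicit Defensive.

Record Cat := Cat_ {
  ob : Type;
  hom : ob -> ob -> Type;
  idm : forall a, hom a a;
  comp : forall x y z, hom y z -> hom x y -> hom x z }.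

Arguments hom {c} _ _.
Arguments idm {c} a.
Arguments comp {c x y z} _ _.

Definition is_category (C : Cat) : Prop :=
  [/\ (forall (a b : ob C) (f : hom a b), comp (idm b) f = f),
      (forall (a b : ob C) (f : hom a b), comp f (idm a) = f) &
      (forall (a b c d : ob C) (f : hom a b) (g : hom b c) (h : hom c d),
          comp h (comp g f) = comp (comp h g) f)].

Record Functor (C D : Cat) := Functor_ {
  fob : ob C -> ob D;
  fmap : forall a b : ob C, hom a b -> hom (fob a) (fob b) }.

Arguments fmap {C D} f {a b} _.

Definition is_functor (C D : Cat) (F : Functor C D) : Prop :=
  (forall a : ob C, fmap F (idm a) = idm (fob F a)) /\
  (forall (a b c : ob C) (g : hom b c) (f : hom a b),
      fmap F (comp g f) = comp (fmap F g) (fmap F f)).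

Definition is_iso {C : Cat} {a b : ob C} (f : hom a b) : Prop :=
  exists g : hom b a, comp g f = idm a /\ comp f g = idm b.

Definition cat_equiv (C D : Cat) : Prop :=
  exists (F : Functor C D) (G : Functor D C),
    [/\ is_functor F, is_functor G,
        (exists eta : forall a : ob C, hom a (fob G (fob F a)),
            (forall a, is_iso (eta a)) /\
            (forall (a b : ob C) (f : hom a b),
                comp (eta b) f = comp (fmap G (fmap F f)) (eta a))) &
        (exists eps : forall d : ob D, hom (fob F (fob G d)) d,
            (forall d, is_iso (eps d)) /\
            (forall (d d' : ob D) (g : hom d d'),
                comp (eps d') (fmap F (fmap G g)) = comp g (eps d)))].

Record bij (S T : finType) := Bij { bfun :> S -> T; bfun_bij : bijective bfun }.

Lemma bijective_id (S : Type) : bijective (@id S).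
Proof. by exists id. Qed.

Definition bij_idm (S : finType) : bij S S := @Bij S S id (bijective_id S).
Definition bij_comp' (S T U : finType) (g : bij T U) (f : bij S T) : bij S U :=
  @Bij S U (g \o f) (bij_comp (bfun_bij g) (bfun_bij f)).

Definition Sigma_star : Cat := @Cat_ finType bij bij_idm bij_comp'.

Record fam (A : Cat) := Fam { fS : finType; fA : fS -> ob A }.
Record fam_hom (A : Cat) (X Y : fam A) := FamHom {
  fsig : bij (fS X) (fS Y);
  fmor : forall t : fS X, hom (fA X t) (fA Y (fsig t)) }.

Definition fam_id (A : Cat) (X : fam A) : fam_hom X X :=
  @FamHom A X X (bij_idm (fS X)) (fun t => idm (fA X t)).
Definition fam_comp (A : Cat) (X Y Z : fam A) (g : fam_hom Y Z) (f : fam_hom X Y)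
  : fam_hom X Z :=
  @FamHom A X Z (bij_comp' (fsig g) (fsig f))
    (fun t => comp (fmor g (fsig f t)) (fmor f t)).

Definition Sigma_star_wr (A : Cat) : Cat := @Cat_ (fam A) (@fam_hom A) (@fam_id A) (@fam_comp A).

(* Sigma_*^{wr n}: chains S_1 <- S_2 <- ... <- S_n                     *)
(* (S_{k+1} is cS (k : 'I_n), the map S_{k+2} -> S_{k+1} is cp k)      *)

Record chain (n : nat) := Chain {
  cS : 'I_n -> finType;
  cp : forall (k : 'I_n) (H : k.+1 < n), cS (Ordinal H) -> cS k }.
Arguments cp {n} c {k} H _.

Record chain_hom (n : nat) (F G : chain n) := ChainHom {
  cphi : forall k : 'I_n, bij (cS F k) (cS G k);
  ccomm : forall (k : 'I_n) (H : k.+1 < n) (x : cS F (Ordinal H)),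
      cphi k (cp F H x) = cp G H (cphi (Ordinal H) x) }.

Lemma chain_id_comm n (F : chain n) (k : 'I_n) (H : k.+1 < n) (x : cS F (Ordinal H)) :
  bij_idm (cS F k) (cp F H x) = cp F H (bij_idm (cS F (Ordinal H)) x).
Proof. by []. Qed.

Definition chain_id n (F : chain n) : chain_hom F F :=
  @ChainHom n F F (fun k => bij_idm (cS F k)) (@chain_id_comm n F).

Lemma chain_comp_comm n (F G K : chain n) (g : chain_hom G K) (f : chain_hom F G)
  (k : 'I_n) (H : k.+1 < n) (x : cS F (Ordinal H)) :
  bij_comp' (cphi g k) (cphi f k) (cp F H x)
  = cp K H (bij_comp' (cphi g (Ordinal H)) (cphi f (Ordinal H)) x).
Proof. by rewrite /= ccomm ccomm. Qed.

Definition chain_comp n (F G K : chain n) (g : chain_hom G K) (f : chain_hom F G)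
  : chain_hom F K :=
  @ChainHom n F K (fun k => bij_comp' (cphi g k) (cphi f k)) (chain_comp_comm g f).

Definition Sigma_star_iter (n : nat) : Cat :=
  @Cat_ (chain n) (@chain_hom n) (@chain_id n) (@chain_comp n).

(* Sigma_*^{wr n} wr A: a chain with a family of objects of A indexed by the
   top set S_n (= cS k for the unique k with k.+1 = n). *)
Record dchain (A : Cat) (n : nat) := DChain {
  dc : chain n;
  ddec : forall k : 'I_n, k.+1 == n -> cS dc k -> ob A }.

Record dchain_hom (A : Cat) n (X Y : dchain A n) := DChainHom {
  dphi : chain_hom (dc X) (dc Y);
  dmor : forall (k : 'I_n) (H : k.+1 == n) (x : cS (dc X) k),
      hom (ddec X k H x) (ddec Y k H (cphi dphi k x)) }.

Definition dchain_id (A : Cat) n (X : dchain A n) : dchain_hom X X :=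
  @DChainHom A n X X (chain_id (dc X)) (fun k H x => idm (ddec X k H x)).

Definition dchain_comp (A : Cat) n (X Y Z : dchain A n)
  (g : dchain_hom Y Z) (f : dchain_hom X Y) : dchain_hom X Z :=
  @DChainHom A n X Z (chain_comp (dphi g) (dphi f))
    (fun k H x => comp (dmor g k H (cphi (dphi f) k x)) (dmor f k H x)).

Definition Sigma_star_iter_wr (n : nat) (A : Cat) : Cat :=
  @Cat_ (dchain A n) (@dchain_hom A n) (@dchain_id A n) (@dchain_comp A n).

Section Graph.
Context {V E : finType}.
Variables (src tgt : E -> V) (root : V).

Definition adj : rel V := fun u w =>
  [exists e, ((src e == u) && (tgt e == w)) || ((src e == w) && (tgt e == u))].

Definition valence (v : V) : nat :=
  #|[set e | src e == v]| + #|[set e | tgt e == v]|.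

(* A walk from v: a sequence of edges, each traversed forwards (true)
   or backwards (false); walk_end returns its end vertex (None if the
   sequence is not a walk starting at v). *)
Fixpoint walk_end (v : V) (s : seq (E * bool)) : option V :=
  match s with
  | [::] => Some v
  | (e, b) :: s' =>
      if (if b then src e else tgt e) == v
      then walk_end (if b then tgt e else src e) s' else None
  end.

Definition acyclic : Prop :=
  forall (v : V) (s : seq (E * bool)),
    s != [::] -> uniq (map fst s) -> walk_end v s <> Some v.

Definition connected : Prop := forall v w : V, connect adj v w.

Fixpoint ball (k : nat) : {set V} :=
  match k with
  | 0 => [set root]
  | k'.+1 => ball k' :|: [set w | [exists u in ball k', adj u w]]
  end.

Definition at_dist (v : V) (d : nat) : bool :=
  (v \in ball d) && (if d is d'.+1 then v \notin ball d' else true).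

Definition oriented_to_root : Prop :=
  forall e : E, exists d, at_dist (tgt e) d /\ at_dist (src e) d.+1.

End Graph.

Record tree := Tree {
  tV : finType;
  tE : finType;
  tsrc : tE -> tV;
  ttgt : tE -> tV;
  troot : tV;
  tleaf : {set tV};
  troot_notleaf : troot \notin tleaf;
  troot_val : valence tsrc ttgt troot = 1;
  tleaf_val : forall v, v \in tleaf -> valence tsrc ttgt v = 1;
  tinterior_ex : exists v, (v != troot) && (v \notin tleaf);
  tconnected : connected tsrc ttgt;
  tacyclic : acyclic tsrc ttgt;
  toriented : oriented_to_root tsrc ttgt troot }.

Definition interior (T : tree) : {set tV T} :=
  [set v | (v != troot T) && (v \notin tleaf T)].

(* height v = (graph distance from root) - 1; level n tree: leaves have
   height n (distance n+1), interior vertices height < n (distance <= n) *)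
Definition is_level (n : nat) (T : tree) : Prop :=
  (forall v, v \in tleaf T -> at_dist (tsrc T) (ttgt T) (troot T) v n.+1) /\
  (forall v, v \in interior T -> v \in ball (tsrc T) (ttgt T) (troot T) n).

Definition In {T : tree} (v : tV T) : Type := {e : tE T | ttgt T e == v}.

Record ltree (n : nat) := LTree {
  ltr : tree;
  llevel : is_level n ltr;
  lS : tV ltr -> finType;
  llab : forall v, lS v -> In v;
  llab_bij : forall v, bijective (llab v) }.

Record tiso (T T' : tree) := TIso {
  iV : tV T -> tV T';
  iE : tE T -> tE T';
  iV_bij : bijective iV;
  iE_bij : bijective iE;
  i_src : forall e, tsrc T' (iE e) = iV (tsrc T e);
  i_tgt : forall e, ttgt T' (iE e) = iV (ttgt T e);
  i_root : iV (troot T) = troot T';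
  i_leaf : forall v, v \in tleaf T -> iV v \in tleaf T';
  i_leaf_r : forall v, iV v \in tleaf T' -> v \in tleaf T }.

Definition tiso_id (T : tree) : tiso T T :=
  @TIso T T id id (bijective_id _) (bijective_id _)
    (fun e => erefl) (fun e => erefl) erefl (fun v H => H) (fun v H => H).

Section TisoComp.
Variables (T1 T2 T3 : tree) (g : tiso T2 T3) (f : tiso T1 T2).
Lemma tc_src e : tsrc T3 (iE g (iE f e)) = iV g (iV f (tsrc T1 e)).
Proof. by rewrite i_src i_src. Qed.
Lemma tc_tgt e : ttgt T3 (iE g (iE f e)) = iV g (iV f (ttgt T1 e)).
Proof. by rewrite i_tgt i_tgt. Qed.
Lemma tc_root : iV g (iV f (troot T1)) = troot T3.
Proof. by rewrite i_root i_root. Qed.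
Lemma tc_leaf_r v : iV g (iV f v) \in tleaf T3 -> v \in tleaf T1.
Proof. by move=> H; apply: i_leaf_r; apply: i_leaf_r H. Qed.
Definition tiso_comp : tiso T1 T3 :=
  @TIso T1 T3 (fun v => iV g (iV f v)) (fun e => iE g (iE f e))
    (bij_comp (iV_bij g) (iV_bij f)) (bij_comp (iE_bij g) (iE_bij f))
    tc_src tc_tgt tc_root (fun v H => i_leaf g (i_leaf f H)) tc_leaf_r.
End TisoComp.

Definition Psi (n : nat) : Cat :=
  @Cat_ (ltree n) (fun X Y => tiso (ltr X) (ltr Y))
    (fun X => tiso_id (ltr X)) (fun X Y Z g f => tiso_comp g f).

Record dtree (A : Cat) (n : nat) := DTree {
  dt : ltree n;
  tdec : forall v : tV (ltr dt), v \in tleaf (ltr dt) -> ob A }.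

Record dtree_hom (A : Cat) n (X Y : dtree A n) := DTreeHom {
  tmor_iso : tiso (ltr (dt X)) (ltr (dt Y));
  tmor : forall v (H : v \in tleaf (ltr (dt X))),
      hom (tdec X H) (tdec Y (i_leaf tmor_iso H)) }.

Definition dtree_id (A : Cat) n (X : dtree A n) : dtree_hom X X :=
  @DTreeHom A n X X (tiso_id _) (fun v H => idm (tdec X H)).

Definition dtree_comp (A : Cat) n (X Y Z : dtree A n)
  (g : dtree_hom Y Z) (f : dtree_hom X Y) : dtree_hom X Z :=
  @DTreeHom A n X Z (tiso_comp (tmor_iso g) (tmor_iso f))
    (fun v H => comp (tmor g (i_leaf (tmor_iso f) H)) (tmor f H)).

Definition Psi_wr (n : nat) (A : Cat) : Cat :=
  @Cat_ (dtree A n) (@dtree_hom A n) (@dtree_id A n) (@dtree_comp A n).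

(* In a tree every vertex other than the root has exactly one outgoing edge
   (two would close a cycle through their targets), so the tree is described
   by its parent map, and the distance to the root drops by one along it.  In
   a level n tree there is a single vertex of height 0, and the vertices of
   heights 1, ..., n form a chain S_1 <- ... <- S_n under the parent map.
   Conversely every chain spans a level n tree, and isomorphisms of trees,
   which preserve heights and parents, are exactly the level-wise bijections
   commuting with the maps of the chains.  So building the tree of a chain is
   a fully faithful, essentially surjective functor from Sigma_*^{wr n} to
   Psi_n; leaf decorations are carried along unchanged, and for n = 1 a chain
   is just one finite set. *)

From mathcomp Require Import all_boot.
From Stdlib Require Import ClassicalEpsilon ProofIrrelevance FunctionalExtensionality.

Set Implicit Arguments.
Unset Strict Implicit.
Unset Printing Implicit Defensive.

Definition isomorphic (C : Cat) (a b : ob C) : Prop :=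
  exists (phi : hom a b) (psi : hom b a), comp psi phi = idm a /\ comp phi psi = idm b.

Definition fully_faithful (C D : Cat) (F : Functor C D) : Prop :=
  forall a b : ob C, exists g : hom (fob F a) (fob F b) -> hom a b,
    cancel (@fmap _ _ F a b) g /\ cancel g (@fmap _ _ F a b).

Definition ess_surj (C D : Cat) (F : Functor C D) : Prop :=
  forall d : ob D, exists c : ob C, isomorphic (fob F c) d.

Lemma dependent_choice (A : Type) (B : A -> Type) (R : forall a, B a -> Prop) :
  (forall a, exists b, R a b) -> exists f : forall a, B a, forall a, R a (f a).
Proof.
move=> exR; exists (fun a => proj1_sig (constructive_indefinite_description _ (exR a))).
by move=> a; case: constructive_indefinite_description.
Qed.

Lemma inj_surj_bijective (A B : Type) (f : A -> B) :
  injective f -> (forall b, exists a, f a = b) -> bijective f.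
Proof.
move=> f_inj /(dependent_choice (B := fun _ => A)) [g fgK].
by exists g => // a; apply: f_inj; rewrite fgK.
Qed.

Lemma fully_faithful_inj_surj (C D : Cat) (F : Functor C D) :
  (forall a b, injective (@fmap _ _ F a b)) ->
  (forall a b (g : hom (fob F a) (fob F b)), exists f, fmap F f = g) -> fully_faithful F.
Proof.
move=> fmap_inj fmap_surj a b.
by case: (inj_surj_bijective (@fmap_inj a b) (@fmap_surj a b)) => g; exists g.
Qed.

Section EquivOfFullyFaithful.
Variables (C D : Cat) (F : Functor D C).
Hypotheses (catC : is_category C) (funF : is_functor F)
  (ffF : fully_faithful F) (esF : ess_surj F).

Lemma cat_equiv_fully_faithful_ess_surj : cat_equiv C D.
Proof.
case: catC => idlC idrC asC; case: funF => Fid Fcomp.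
pose Finv a b := proj1_sig (constructive_indefinite_description _ (ffF a b)).
have FinvK a b : cancel (@fmap _ _ F a b) (Finv a b).
  by rewrite /Finv; case: constructive_indefinite_description => g [].
have FKinv a b : cancel (Finv a b) (@fmap _ _ F a b).
  by rewrite /Finv; case: constructive_indefinite_description => g [].
have Finv_comp a b c (g : hom (fob F b) (fob F c)) (f : hom (fob F a) (fob F b)) :
    Finv _ _ (comp g f) = comp (Finv _ _ g) (Finv _ _ f).
  by rewrite -[in LHS](FKinv _ _ g) -[in LHS](FKinv _ _ f) -Fcomp FinvK.
have Finv_id a : Finv _ _ (idm (fob F a)) = idm a by rewrite -Fid FinvK.
have [Gob GobP] := dependent_choice esF.
have [phi /(dependent_choice (B := fun c => hom c (fob F (Gob c)))) [psi phiK]] :=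
  dependent_choice GobP.
have psiphi c : comp (psi c) (phi c) = idm _ by case: (phiK c).
have phipsi c : comp (phi c) (psi c) = idm _ by case: (phiK c).
pose G := @Functor_ C D Gob (fun a b h => Finv _ _ (comp (psi b) (comp h (phi a)))).
exists G, F; split => //.
- split => [a|a b c g f] /=; first by rewrite idlC psiphi Finv_id.
  rewrite -Finv_comp; congr (Finv _ _ _).
  by rewrite -!asC (asC _ _ _ _ _ (psi b) (phi b)) phipsi idlC.
- exists psi; split => [c|a b f] /=; first by exists (phi c).
  by rewrite FKinv -!asC phipsi idrC.
- exists (fun d => Finv _ _ (phi (fob F d))); split => [d|d d' g] /=.
    exists (Finv _ _ (psi (fob F d))).
    by rewrite -!Finv_comp psiphi phipsi !Finv_id.
  rewrite -Finv_comp -{2}(FinvK _ _ g) -Finv_comp; congr (Finv _ _ _).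
  by rewrite asC phipsi idlC.
Qed.
End EquivOfFullyFaithful.

Section FunctorComp.
Variables (A B C : Cat) (F : Functor B C) (E : Functor A B).

Definition functor_comp : Functor A C :=
  @Functor_ A C (fun a => fob F (fob E a)) (fun a b f => fmap F (fmap E f)).

Lemma is_functor_comp : is_functor F -> is_functor E -> is_functor functor_comp.
Proof.
case=> F1 F2 [E1 E2]; split => [a|a b c g f] /=; first by rewrite E1 F1.
by rewrite E2 F2.
Qed.

Lemma fully_faithful_comp : fully_faithful F -> fully_faithful E -> fully_faithful functor_comp.
Proof.
move=> ffF ffE a b; have [g [g1 g2]] := ffF (fob E a) (fob E b).
have [h [h1 h2]] := ffE a b.
by exists (fun x => h (g x)); split => x /=; rewrite ?g1 ?h1 ?h2 ?g2.
Qed.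

Lemma ess_surj_comp : is_category C -> is_functor F -> ess_surj F -> ess_surj E ->
  ess_surj functor_comp.
Proof.
case=> idl idr asc [F1 F2] esF esE c.
have [b [phi [psi [H1 H2]]]] := esF c.
have [a [phi' [psi' [H1' H2']]]] := esE b.
exists a, (comp phi (fmap F phi')), (comp (fmap F psi') psi) => /=; split.
  by rewrite -asc (asc _ _ _ _ _ phi psi) H1 idl -F2 H1' F1.
by rewrite -asc (asc _ _ _ _ _ (fmap F psi') (fmap F phi')) -F2 H2' F1 idl H2.
Qed.

Lemma cat_equiv_comp : is_category C -> is_functor F -> fully_faithful F -> ess_surj F ->
  is_functor E -> fully_faithful E -> ess_surj E -> cat_equiv C A.
Proof.
move=> catC funF ffF esF funE ffE esE.
apply: (@cat_equiv_fully_faithful_ess_surj _ _ functor_comp) => //.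
- exact: is_functor_comp.
- exact: fully_faithful_comp.
- exact: ess_surj_comp.
Qed.
End FunctorComp.

(* Leaf decorations take a proof of leafhood as argument, so morphisms between
   them must be transported along equalities of objects. *)
Section HomCast.
Variable A : Cat.

Definition hom_cast (a a' b b' : ob A) (Ea : a = a') (Eb : b = b') (f : hom a b) : hom a' b' :=
  match Ea in _ = x return hom x b' with
  | erefl => match Eb in _ = y return hom a y with erefl => f end end.

Lemma hom_cast_irr (a a' b b' : ob A) (Ea Ea' : a = a') (Eb Eb' : b = b') (f : hom a b) :
  hom_cast Ea Eb f = hom_cast Ea' Eb' f.
Proof. by rewrite (proof_irrelevance _ Ea Ea') (proof_irrelevance _ Eb Eb'). Qed.

Lemma hom_castK (a b : ob A) (Ea : a = a) (Eb : b = b) (f : hom a b) : hom_cast Ea Eb f = f.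
Proof. by rewrite (hom_cast_irr Ea erefl Eb erefl). Qed.

Lemma hom_cast_trans (a a' a'' b b' b'' : ob A) (Ea : a = a') (Eb : b = b') (Ea' : a' = a'')
   (Eb' : b' = b'') (f : hom a b) :
  hom_cast Ea' Eb' (hom_cast Ea Eb f) = hom_cast (etrans Ea Ea') (etrans Eb Eb') f.
Proof. by subst. Qed.

Lemma hom_cast_comp (a a' b b' c c' : ob A) (Ea : a = a') (Eb Eb' : b = b') (Ec : c = c')
  (g : hom b c) (f : hom a b) :
  comp (hom_cast Eb' Ec g) (hom_cast Ea Eb f) = hom_cast Ea Ec (comp g f).
Proof. by rewrite (proof_irrelevance _ Eb' Eb); subst. Qed.

Lemma hom_cast_id (a a' : ob A) (E E' : a = a') : hom_cast E E' (idm a) = idm a'.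
Proof. by rewrite (proof_irrelevance _ E' E); subst. Qed.

Lemma hom_cast_sym (a a' b b' : ob A) (Ea : a = a') (Eb : b = b') (f : hom a b) g :
  hom_cast Ea Eb f = g -> f = hom_cast (esym Ea) (esym Eb) g.
Proof. by move=> <-; subst. Qed.

Lemma hom_cast_id_comp (catA : is_category A) (a b c : ob A) (E : a = b) (E' : b = c) :
  comp (hom_cast erefl E' (idm b)) (hom_cast erefl E (idm a))
  = hom_cast erefl (etrans E E') (idm a).
Proof. by case: catA => idl _ _; subst; apply: idl. Qed.
End HomCast.

Lemma bij_ext (S T : finType) (f g : bij S T) : f =1 g -> f = g.
Proof.
case: f => f fP; case: g => g gP /= /functional_extensionality fg; subst g.
by rewrite (proof_irrelevance _ fP gP).
Qed.

Section Balls.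
Variables (V E : finType) (src tgt : E -> V) (root : V).
Local Notation ball := (ball src tgt root).
Local Notation adj := (adj src tgt).

Lemma ball0 v : (v \in ball 0) = (v == root).
Proof. by rewrite /= inE. Qed.

Lemma ballS k v : (v \in ball k.+1) = (v \in ball k) || [exists u in ball k, adj u v].
Proof. by rewrite /= !inE. Qed.

Lemma ball_le k m v : k <= m -> v \in ball k -> v \in ball m.
Proof.
move=> /subnKC <-; elim: (m - k) => [|j IH]; first by rewrite addn0.
by move=> vk; rewrite addnS ballS IH.
Qed.

Lemma adjP u w :
  reflect (exists e, (src e == u) && (tgt e == w) || (src e == w) && (tgt e == u)) (adj u w).
Proof. exact: existsP. Qed.

Lemma adjC u w : adj u w = adj w u.
Proof. by apply/adjP/adjP => -[e He]; exists e; rewrite orbC. Qed.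

Lemma path_ball k x p : x \in ball k -> path adj x p -> last x p \in ball (k + size p).
Proof.
elim: p k x => [|y p IH] k x /=; first by rewrite addn0.
move=> xk /andP [xy yp]; rewrite addnS -addSn; apply: IH yp.
by rewrite ballS; apply/orP; right; apply/existsP; exists x; rewrite xk.
Qed.

Section Depth.
Variable depth : V -> nat.
Hypotheses (depth0 : forall v, (depth v == 0) = (v == root))
  (depth_adj : forall u w, adj u w -> depth w <= (depth u).+1)
  (depth_down : forall w k, depth w = k.+1 -> exists u, depth u = k /\ adj u w).

Lemma ball_depth k v : (v \in ball k) = (depth v <= k).
Proof.
elim: k v => [|k IH] v; first by rewrite ball0 leqn0 depth0.
rewrite ballS IH; apply/idP/idP.
  case/orP=> [/leqW //|/existsP [u /andP [uk uv]]].
  by apply: leq_trans (depth_adj uv) _; rewrite IH in uk.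
rewrite leq_eqVlt ltnS; case/orP=> [/eqP vk|->//].
have [u [uk uv]] := depth_down vk.
by apply/orP; right; apply/existsP; exists u; rewrite IH uk leqnn.
Qed.

End Depth.

Lemma at_dist_ball (depth : V -> nat) :
  (forall k v, (v \in ball k) = (depth v <= k)) ->
  forall k v, at_dist src tgt root v k = (depth v == k).
Proof.
move=> ballE k v; rewrite /at_dist ballE; case: k => [|k]; first by rewrite leqn0 andbT.
by rewrite ballE -ltnNge eqn_leq andbC.
Qed.
End Balls.

Lemma walk_end_cat (V E : finType) (src tgt : E -> V) v s t :
  walk_end src tgt v (s ++ t) =
  if walk_end src tgt v s is Some w then walk_end src tgt w t else None.
Proof. by elim: s v => [|[e b] s IH] v //=; case: ifP. Qed.

(* A graph in which every vertex has at most one outgoing edge, leading to its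
   parent, and the depth drops by one along every edge, has no cycles: a trail
   first climbs towards the root and then descends, and it can only come back
   to its start by reusing the edge it climbed last. *)
Section AcyclicDepth.
Variables (V E : finType) (src tgt : E -> V) (par : V -> V) (depth : V -> nat).
Hypotheses (src_inj : injective src) (tgt_par : forall e, tgt e = par (src e))
  (depth_edge : forall e, depth (src e) = (depth (tgt e)).+1).

Lemma descending_trail s y w : walk_end src tgt y s = Some w -> uniq (map fst s) ->
  (forall e, e \in map fst s -> src e != y) ->
  depth w = depth y + size s /\ iter (size s) par w = y.
Proof.
elim: s y => [|[e b] s IH] y /=; first by case=> ->; rewrite addn0.
move=> yw /andP [es s_uniq] s_src.
have /negbTE ey := s_src e (mem_head _ _).
case: b yw => /=; first by rewrite ey.
case: ifP => // /eqP ty sw.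
have s_src' e' : e' \in map fst s -> src e' != src e.
  by move=> e's; apply: contraNneq es => /src_inj <-.
have [dw ws] := IH _ sw s_uniq s_src'.
by rewrite dw depth_edge ty addnS /= ws -tgt_par.
Qed.

Lemma trail_up_down s y w : walk_end src tgt y s = Some w -> uniq (map fst s) ->
  exists a b z, [/\ a + b = size s, iter a par y = z, depth z + a = depth y,
     depth w = depth z + b &
     iter b par w = z /\
     ((0 < a -> 0 < b -> iter b.-1 par w != iter a.-1 par y) /\
      (a = 0 -> 0 < b -> exists2 e, e \in map fst s & src e = iter b.-1 par w))].
Proof.
elim: s y => [|[e bb] s IH] y /=.
  by case=> <- _; exists 0, 0, y; split; rewrite ?addn0.
move=> yw /andP [es s_uniq]; case: bb yw => /=; case: ifP => // /eqP ey sw.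
- have [a [b [z [ab az dz dw [bz [c1 c2]]]]]] := IH _ sw s_uniq.
  exists a.+1, b, z; split => //.
  + by rewrite addSn ab.
  + by rewrite iterSr -ey -tgt_par.
  + by rewrite addnS dz -ey depth_edge.
  split=> //; split=> [_ b_gt0|//].
  case: a ab az dz c1 c2 => [|a] ab az dz c1 c2 /=.
    have [e' e's <-] := c2 erefl b_gt0.
    by rewrite -ey; apply: contraNneq es => /src_inj <-.
  by rewrite -iterS iterSr -ey -tgt_par; apply: c1.
- have s_src e' : e' \in map fst s -> src e' != src e.
    by move=> e's; apply: contraNneq es => /src_inj <-.
  have [dw ws] := descending_trail sw s_uniq s_src.
  exists 0, (size s).+1, y; split => //=.
  + by rewrite addn0.
  + by rewrite dw depth_edge ey addnS.
  split; first by rewrite ws -tgt_par.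
  by split => // _ _; exists e; rewrite ?mem_head ?ws.
Qed.

Lemma acyclic_depth : acyclic src tgt.
Proof.
move=> v s s_nil s_uniq vv.
have [a [b [z [ab az dz dw [bz [c1 _]]]]]] := trail_up_down vv s_uniq.
have ba : b = a by apply/eqP; rewrite -(eqn_add2l (depth z)) -dw dz.
subst b; case: a ab {az dz dw bz} c1 => [|a] ab c1.
  by move: s_nil; rewrite -size_eq0 -ab.
by have := c1 isT isT; rewrite eqxx.
Qed.
End AcyclicDepth.

Section TreeStructure.
Variable T : tree.
Local Notation V := (tV T).
Local Notation E := (tE T).
Local Notation src := (tsrc T).
Local Notation tgt := (ttgt T).
Local Notation root := (troot T).
Local Notation ball := (ball src tgt root).

Lemma ball_ex v : exists k, v \in ball k.
Proof.
have /connectP [p rp ->] := tconnected T root v.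
by exists (0 + size p); apply: path_ball rp; rewrite ball0.
Qed.

Definition dist (v : V) : nat := ex_minn (ball_ex v).

Lemma dist_ball k v : (v \in ball k) = (dist v <= k).
Proof.
rewrite /dist; case: ex_minnP => m vm m_min.
by apply/idP/idP => [/m_min //|km]; apply: ball_le km vm.
Qed.

Lemma at_distE v d : at_dist src tgt root v d = (dist v == d).
Proof. exact: at_dist_ball dist_ball d v. Qed.

Lemma dist_edge e : dist (src e) = (dist (tgt e)).+1.
Proof. by have [d []] := toriented T e; rewrite !at_distE => /eqP-> /eqP->. Qed.

Lemma dist0 v : (dist v == 0) = (v == root).
Proof. by rewrite -leqn0 -dist_ball ball0. Qed.

Lemma dist_root : dist root = 0.
Proof. by apply/eqP; rewrite dist0. Qed.

Lemma src_neq_root e : src e != root.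
Proof. by rewrite -dist0 dist_edge. Qed.

Lemma out_edge_ex v : v != root -> exists e, src e == v.
Proof.
rewrite -dist0; case dv: (dist v) => [|d] // _.
have : v \in ball d.+1 by rewrite dist_ball dv.
rewrite ballS dist_ball dv ltnn /= => /existsP [u /andP [ud /adjP [e]]].
rewrite dist_ball in ud.
case/orP=> /andP [/eqP eu /eqP ev]; last by exists e; rewrite eu.
by move: ud; rewrite -eu (dist_edge e) ev dv => /ltnW; rewrite ltnn.
Qed.

Lemma edge_ex : exists e : E, true.
Proof.
have [v /andP [v_root _]] := tinterior_ex T.
by have [e _] := out_edge_ex v_root; exists e.
Qed.

(* An arbitrary edge, returned as a junk value by [out_edge root]. *)
Definition some_edge : E := xchoose edge_ex.
Definition out_edge (v : V) : E := odflt some_edge [pick e | src e == v].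
Definition parent (v : V) : V := tgt (out_edge v).

Lemma src_out_edge v : v != root -> src (out_edge v) = v.
Proof.
move=> v_root; rewrite /out_edge; case: pickP => [e /eqP //|no_out].
by have [e] := out_edge_ex v_root; rewrite no_out.
Qed.

Lemma dist_parent v : v != root -> dist v = (dist (parent v)).+1.
Proof. by move=> v_root; rewrite /parent -dist_edge src_out_edge. Qed.

Lemma trail_join e1 e2 t : e1 != e2 -> dist (tgt e1) = dist (tgt e2) ->
  walk_end src tgt (tgt e1) t = Some (tgt e2) -> uniq (map fst t) ->
  all (fun p => dist (src p.1) <= dist (tgt e1)) t ->
  walk_end src tgt (src e1) ((e1, true) :: t ++ [:: (e2, false)]) = Some (src e2) /\
  uniq (map fst ((e1, true) :: t ++ [:: (e2, false)])).
Proof.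
move=> e12 d12 t12 t_uniq t_dist; split; first by rewrite /= eqxx walk_end_cat t12 /= eqxx.
have t_src x : x \in map fst t -> dist (src x) <= dist (tgt e1).
  by case/mapP => -[e bb] /(allP t_dist) /= ? ->.
rewrite /= map_cat /= cat_uniq t_uniq /= mem_cat inE negb_or e12 orbF !andbT /=.
by apply/andP; split; apply/negP => /t_src; rewrite dist_edge ?d12 ltnn.
Qed.

Lemma parent_trail d a b : dist a = d -> dist b = d ->
  exists t, [/\ walk_end src tgt a t = Some b, uniq (map fst t) &
             all (fun p => dist (src p.1) <= d) t].
Proof.
elim: d a b => [|d IH] a b da db.
  by move/eqP: da; move/eqP: db; rewrite !dist0 => /eqP -> /eqP ->; exists [::].
case: (eqVneq a b) => [<-|ab]; first by exists [::].
have a_root : a != root by rewrite -dist0 da.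
have b_root : b != root by rewrite -dist0 db.
have dpa : dist (parent a) = d by move: da; rewrite dist_parent // => -[].
have dpb : dist (parent b) = d by move: db; rewrite dist_parent // => -[].
have oab : out_edge a != out_edge b.
  by apply: contra ab => /eqP oab; rewrite -(src_out_edge a_root) oab src_out_edge.
have [t [tab t_uniq t_dist]] := IH _ _ dpa dpb.
rewrite -dpa in t_dist; rewrite -dpb in dpa.
have [ab_walk ab_uniq] := trail_join oab dpa tab t_uniq t_dist.
exists ((out_edge a, true) :: t ++ [:: (out_edge b, false)]).
rewrite !src_out_edge // in ab_walk; split => //.
rewrite /= all_cat /= !src_out_edge // da db leqnn /= andbT.
by apply: sub_all t_dist => -[e bb] /=; rewrite dpa dpb => /leqW.
Qed.

Lemma tsrc_inj : injective src.
Proof.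
move=> e1 e2 s12; apply/eqP/negPn/negP => e12.
have d12 : dist (tgt e1) = dist (tgt e2) by apply/eqP; rewrite -eqSS -!dist_edge s12.
have [t [t12 t_uniq t_dist]] := parent_trail (erefl _) (esym d12).
have [cycle cycle_uniq] := trail_join e12 d12 t12 t_uniq t_dist.
by apply: (@tacyclic T (src e1) _ _ cycle_uniq); rewrite ?cycle ?s12.
Qed.

Lemma root_edge_ex : exists e0, [set e | tgt e == root] = [set e0].
Proof.
apply/cards1P; move: (troot_val T); rewrite /valence.
suff -> : #|[set e | src e == root]| = 0 by rewrite add0n => ->.
by apply/eqP; rewrite cards_eq0; apply/eqP/setP => e; rewrite !inE (negbTE (src_neq_root e)).
Qed.

Definition root_edge : E := odflt some_edge [pick e | tgt e == root].

Lemma tgt_eq_root e : (tgt e == root) = (e == root_edge).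
Proof.
have [e0 /setP e0P] := root_edge_ex.
have e0E x : (tgt x == root) = (x == e0) by move: (e0P x); rewrite !inE.
rewrite /root_edge; case: pickP => [x|no_x]; last by move: (no_x e0); rewrite e0E eqxx.
by rewrite !e0E => /eqP ->.
Qed.

Lemma tgt_root_edge : tgt root_edge = root.
Proof. by apply/eqP; rewrite tgt_eq_root. Qed.

Definition root_child : V := src root_edge.

Lemma dist_eq1 v : (dist v == 1) = (v == root_child).
Proof.
apply/idP/idP => [dv|/eqP ->]; last by rewrite dist_edge tgt_root_edge dist_root.
have v_root : v != root by rewrite -dist0 (eqP dv).
move: dv; rewrite dist_parent // eqSS dist0 /parent tgt_eq_root /root_child => /eqP <-.
by rewrite src_out_edge.
Qed.

Section Level.
Variables (n : nat) (levelT : is_level n T).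

Lemma leaf_dist v : (v \in tleaf T) = (dist v == n.+1).
Proof.
case: levelT => leaf_at int_ball; apply/idP/idP => [/leaf_at|dv]; first by rewrite at_distE.
apply/negPn/negP => v_leaf.
have v_root : v != root by rewrite -dist0 (eqP dv).
by have := int_ball v; rewrite inE v_root v_leaf dist_ball (eqP dv) ltnn => /(_ isT).
Qed.

Lemma dist_leq_level v : dist v <= n.+1.
Proof.
case: (boolP (v \in tleaf T)) => [|v_leaf]; first by rewrite leaf_dist => /eqP ->.
case: (eqVneq v root) => [->|v_root]; first by rewrite dist_root.
by apply: leqW; rewrite -dist_ball; apply: levelT.2; rewrite inE v_root.
Qed.
End Level.
End TreeStructure.

Lemma tiso_ext (T T' : tree) (f g : tiso T T') : iV f =1 iV g -> iE f =1 iE g -> f = g.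
Proof.
case: f => v1 e1 ? ? ? ? ? ? ?; case: g => v2 e2 ? ? ? ? ? ? ? /=.
move=> /functional_extensionality v12 /functional_extensionality e12; subst v2 e2.
by f_equal; apply: proof_irrelevance.
Qed.

Lemma Psi_category n : is_category (Psi n).
Proof. by split => *; apply: tiso_ext. Qed.

Lemma tiso_eq (T T' : tree) (f g : tiso T T') : iV f =1 iV g -> f = g.
Proof.
move=> fg; apply: tiso_ext => // e; apply: (@tsrc_inj T').
by rewrite !i_src fg.
Qed.

Section TreeIsoFacts.
Variables (T T' : tree) (f : tiso T T').

Lemma iV_inj : injective (iV f).
Proof. exact: bij_inj (iV_bij f). Qed.

Lemma iV_surj v' : exists v, iV f v = v'.
Proof. by case: (iV_bij f) => g _ gK; exists (g v'). Qed.

Lemma iE_surj e' : exists e, iE f e = e'.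
Proof. by case: (iE_bij f) => g _ gK; exists (g e'). Qed.

Lemma adj_iV u w : adj (tsrc T') (ttgt T') (iV f u) (iV f w) = adj (tsrc T) (ttgt T) u w.
Proof.
apply/adjP/adjP => -[e He]; last by exists (iE f e); rewrite i_src i_tgt !(inj_eq iV_inj).
have [e0 e0e] := iE_surj e; exists e0.
by rewrite -e0e i_src i_tgt !(inj_eq iV_inj) in He.
Qed.

Lemma ball_iV k v : (iV f v \in ball (tsrc T') (ttgt T') (troot T') k) =
                    (v \in ball (tsrc T) (ttgt T) (troot T) k).
Proof.
elim: k v => [|k IH] v; first by rewrite !ball0 -(i_root f) (inj_eq iV_inj).
rewrite !ballS IH; congr (_ || _); apply/existsP/existsP => -[u]; last first.
  by exists (iV f u); rewrite IH adj_iV.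
move=> Hu; have [u0 u0u] := iV_surj u; exists u0.
by rewrite -u0u IH adj_iV in Hu.
Qed.

Lemma dist_iV v : dist (iV f v) = dist v.
Proof.
apply/eqP; rewrite eqn_leq -dist_ball ball_iV dist_ball leqnn /=.
by rewrite -dist_ball -ball_iV dist_ball.
Qed.

Lemma tiso_inverse : exists g : tiso T' T, tiso_comp g f = tiso_id T /\ tiso_comp f g = tiso_id T'.
Proof.
case: (iV_bij f) => gv gvK gvK'; case: (iE_bij f) => ge geK geK'.
have gsrc e : tsrc T (ge e) = gv (tsrc T' e).
  by apply: iV_inj; rewrite -i_src !gvK' geK'.
have gtgt e : ttgt T (ge e) = gv (ttgt T' e).
  by apply: iV_inj; rewrite -i_tgt !gvK' geK'.
have groot : gv (troot T') = troot T by rewrite -(i_root f) gvK.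
have gleaf v : v \in tleaf T' -> gv v \in tleaf T.
  by move=> v_leaf; apply: (i_leaf_r f); rewrite gvK'.
have gleaf_r v : gv v \in tleaf T -> v \in tleaf T'.
  by move=> /(i_leaf f); rewrite gvK'.
exists (@TIso T' T gv ge (Bijective gvK' gvK) (Bijective geK' geK) gsrc gtgt groot gleaf gleaf_r).
by split; apply: tiso_ext => x /=.
Qed.
End TreeIsoFacts.

(* The tree of a chain S_1 <- ... <- S_n: a root, one vertex of height 0, and
   above it the elements of S_{k+1} as the vertices of height k+1, each joined
   to its image in S_k (or to the height 0 vertex when k = 0).  An edge is
   named after its source, so the edges are [None] (from the height 0 vertex
   to the root) and the nodes. *)
Section ChainTree.
Variables (n : nat) (c : chain n).

Definition node := {k : 'I_n & cS c k}.
Definition cedge := option node.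
Definition cvert := option cedge.
Definition cnode (k : 'I_n) (x : cS c k) : cvert := Some (Some (existT _ k x)).

Lemma cnode_inj k : injective (@cnode k).
Proof. by move=> x y /Some_inj/Some_inj; apply: inj_pair2. Qed.

Definition node_parent (u : node) : option node :=
  let: existT k x := u in
  (match k as k0 return cS c k0 -> option node with
   | Ordinal 0 _ => fun _ => None
   | Ordinal m.+1 lt_m_n => fun x =>
       Some (existT _ (Ordinal (ltnW lt_m_n)) (@cp n c (Ordinal (ltnW lt_m_n)) lt_m_n x))
   end) x.

Definition csrc (e : cedge) : cvert := Some e.
Definition ctgt (e : cedge) : cvert := if e is Some u then Some (node_parent u) else None.
Definition croot : cvert := None.
Definition cpar (v : cvert) : cvert := if v is Some e then ctgt e else croot.
Definition cleaves : {set cvert} :=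
  [set v : cvert | if v is Some (Some u) then (tag u).+1 == n else false].
Definition cdepth (v : cvert) : nat :=
  match v with None => 0 | Some None => 1 | Some (Some u) => (tag u).+2 end.

Lemma cdepth_parent u : cdepth (Some (node_parent u)) = (tag u).+1.
Proof. by case: u => -[[|m] ?] x. Qed.

Lemma cdepth_edge e : cdepth (csrc e) = (cdepth (ctgt e)).+1.
Proof. by case: e => [u|] //; rewrite [ctgt _]/= cdepth_parent. Qed.

Lemma cadj_edge e : adj csrc ctgt (csrc e) (ctgt e).
Proof. by apply/adjP; exists e; rewrite !eqxx. Qed.

Lemma cdepth_adj u w : adj csrc ctgt u w -> cdepth w <= (cdepth u).+1.
Proof.
case/adjP => e /orP [] /andP [/eqP <- /eqP <-]; rewrite cdepth_edge //.
by rewrite !leqW.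
Qed.

Lemma cdepth0 v : (cdepth v == 0) = (v == croot).
Proof. by case: v => [[u|]|]. Qed.

Lemma cdepth_down w k : cdepth w = k.+1 -> exists u, cdepth u = k /\ adj csrc ctgt u w.
Proof.
case: w => [e|] // dw; exists (ctgt e); split.
  by move: dw; rewrite -/(csrc e) cdepth_edge => -[].
by rewrite adjC; apply: cadj_edge.
Qed.

Lemma cball k v : (v \in ball csrc ctgt croot k) = (cdepth v <= k).
Proof. exact: ball_depth cdepth0 cdepth_adj cdepth_down k v. Qed.

Lemma cat_dist k v : at_dist csrc ctgt croot v k = (cdepth v == k).
Proof. exact: at_dist_ball cball k v. Qed.

Lemma coriented : oriented_to_root csrc ctgt croot.
Proof. by move=> e; exists (cdepth (ctgt e)); rewrite !cat_dist cdepth_edge. Qed.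

Lemma cacyclic : acyclic csrc ctgt.
Proof.
by apply: (@acyclic_depth _ _ _ _ cpar cdepth) => //; [apply: Some_inj | apply: cdepth_edge].
Qed.

Lemma croot_notleaf : croot \notin cleaves.
Proof. by rewrite inE. Qed.

Lemma croot_val : valence csrc ctgt croot = 1.
Proof.
rewrite /valence.
have -> : [set e | csrc e == croot] = set0 by apply/setP => -[u|]; rewrite !inE.
have -> : [set e | ctgt e == croot] = [set None] by apply/setP => -[u|]; rewrite !inE.
by rewrite cards0 cards1.
Qed.

Lemma cleaf_val v : v \in cleaves -> valence csrc ctgt v = 1.
Proof.
case: v => [[u|]|]; rewrite inE //= => u_top; rewrite /valence.
have -> : [set e | csrc e == Some (Some u)] = [set Some u] by apply/setP => e; rewrite !inE.
suff -> : [set e | ctgt e == Some (Some u)] = set0 by rewrite cards0 cards1.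
apply/setP => -[u'|]; rewrite !inE //=; apply/negP => /eqP [] u'u.
have := cdepth_parent u'; rewrite u'u /= => -[tu'].
by have := ltn_ord (tag u'); rewrite -tu' (eqP u_top) ltnn.
Qed.

Lemma cinterior_ex : exists v, (v != croot) && (v \notin cleaves).
Proof. by exists (Some None); rewrite inE. Qed.

Lemma cconnected : connected csrc ctgt.
Proof.
have to_root k v : cdepth v = k -> connect (adj csrc ctgt) v croot.
  elim: k v => [|k IH] v; first by move/eqP; rewrite cdepth0 => /eqP ->.
  move=> /cdepth_down [u [/IH ur uv]].
  by apply: connect_trans ur; apply: connect1; rewrite adjC.
move=> v w; apply: connect_trans (to_root _ v erefl) _.
rewrite (sym_connect_sym (@adjC _ _ _ _)); exact: to_root.
Qed.

Definition chain_tree : tree :=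
  @Tree cvert cedge csrc ctgt croot cleaves croot_notleaf croot_val cleaf_val cinterior_ex
    cconnected cacyclic coriented.

Lemma chain_tree_level : 0 < n -> is_level n chain_tree.
Proof.
move=> n_gt0; split => v.
  by rewrite cat_dist; case: v => [[u|]|]; rewrite inE //= => /eqP ->.
rewrite inE cball => /andP []; case: v => [[u|]|] //= _; rewrite inE /=.
by move=> u_top; rewrite ltn_neqAle u_top ltn_ord.
Qed.
End ChainTree.

Definition in_edges (T : tree) (v : tV T) : finType := {e : tE T | ttgt T e == v}.

(* Morphisms of [Psi n] do not see the labels, so any labelling will do. *)
Definition ltree_of n (T : tree) (levelT : is_level n T) : ltree n :=
  @LTree n T levelT (@in_edges T) (fun v e => e) (fun v => bijective_id _).

Lemma chain_hom_ext n (c c' : chain n) (h h' : chain_hom c c') :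
  (forall k x, cphi h k x = cphi h' k x) -> h = h'.
Proof.
case: h h' => [phi comm] [phi' comm'] /= phi_eq.
have phiE : phi = phi' by apply: functional_extensionality_dep => k; apply: bij_ext.
by subst phi'; f_equal; apply: proof_irrelevance.
Qed.

Section ChainTreeFunctor.
Variables (n : nat) (n_gt0 : 0 < n).

Lemma node_parent_S (c : chain n) (k : 'I_n) (lt_k_n : k.+1 < n) (x : cS c (Ordinal lt_k_n)) :
  node_parent (existT _ (Ordinal lt_k_n) x) = Some (existT _ k (cp c lt_k_n x)).
Proof. by case: k lt_k_n x => m ? lt_k_n x /=; rewrite (bool_irrelevance (ltnW lt_k_n)). Qed.

Lemma ttgt_node (c : chain n) (k : 'I_n) (lt_k_n : k.+1 < n) (x : cS c (Ordinal lt_k_n)) :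
  ttgt (chain_tree c) (Some (existT _ (Ordinal lt_k_n) x)) = cnode (cp c lt_k_n x).
Proof. exact: (congr1 Some (node_parent_S x)). Qed.

Section ChainHomTree.
Variables (c c' : chain n) (h : chain_hom c c').

Definition node_map (u : node c) : node c' := existT _ (tag u) (cphi h (tag u) (tagged u)).

Lemma node_map_parent u : node_parent (node_map u) = omap node_map (node_parent u).
Proof. by case: u => -[[|m] lt_m_n] x //=; rewrite /node_map /= ccomm. Qed.

Lemma node_map_inj : injective node_map.
Proof.
case=> k x [k' x'] e; have /= kk' := congr1 (@projT1 _ _) e; subst k'.
by congr existT; apply: (bij_inj (bfun_bij _) (inj_pair2 _ _ _ _ _ e)).
Qed.

Lemma node_map_surj u' : exists u, node_map u = u'.
Proof.
case: u' => k y; case: (bfun_bij (cphi h k)) => g _ gK.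
by exists (existT _ k (g y)); rewrite /node_map /= gK.
Qed.

Definition cvert_map (v : cvert c) : cvert c' := omap (omap node_map) v.
Definition cedge_map (e : cedge c) : cedge c' := omap node_map e.

Lemma cedge_map_bij : bijective cedge_map.
Proof.
apply: inj_surj_bijective => [[u|] [u'|] //= /Some_inj/node_map_inj -> //|[u'|]].
  by have [u <-] := node_map_surj u'; exists (Some u).
by exists None.
Qed.

Lemma cvert_map_bij : bijective cvert_map.
Proof.
apply: inj_surj_bijective => [[e|] [e'|] //= /Some_inj|[e'|]]; last by exists None.
  by move=> /(bij_inj cedge_map_bij) ->.
by case: cedge_map_bij => g _ gK; exists (Some (g e')); rewrite /= -/(cedge_map _) gK.
Qed.

Lemma cedge_map_src e : csrc (cedge_map e) = cvert_map (csrc e).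
Proof. by []. Qed.

Lemma cedge_map_tgt e : ctgt (cedge_map e) = cvert_map (ctgt e).
Proof. by case: e => [u|] //; congr Some; apply: node_map_parent. Qed.

Lemma cvert_map_leaf v : v \in cleaves c -> cvert_map v \in cleaves c'.
Proof. by case: v => [[u|]|]; rewrite !inE. Qed.

Lemma cvert_map_leaf_r v : cvert_map v \in cleaves c' -> v \in cleaves c.
Proof. by case: v => [[u|]|]; rewrite !inE. Qed.

Definition chain_tiso : tiso (chain_tree c) (chain_tree c') :=
  @TIso (chain_tree c) (chain_tree c') cvert_map cedge_map cvert_map_bij cedge_map_bij
    cedge_map_src cedge_map_tgt erefl cvert_map_leaf cvert_map_leaf_r.
End ChainHomTree.

Definition Psi_of_chain : Functor (Sigma_star_iter n) (Psi n) :=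
  @Functor_ (Sigma_star_iter n) (Psi n) (fun c => ltree_of (chain_tree_level c n_gt0))
    (fun c c' h => chain_tiso h).

Lemma is_functor_Psi_of_chain : is_functor Psi_of_chain.
Proof. by split => *; apply: tiso_ext => [[[[k x]|]|]|[[k x]|]]. Qed.

Lemma dist_chain_tree (c : chain n) (v : cvert c) : @dist (chain_tree c) v = cdepth v.
Proof. by apply/eqP; rewrite -at_distE /= cat_dist. Qed.

Lemma cdepth_cnode_inv (c : chain n) (v : cvert c) (k : 'I_n) :
  cdepth v = k.+2 -> exists x : cS c k, v = cnode x.
Proof.
case: v => [[[k' x]|]|] //= [/val_inj kk']; subst k'.
by exists x.
Qed.

Section ChainTreeIso.
Variables (c c' : chain n) (f : tiso (chain_tree c) (chain_tree c')).

Lemma cdepth_iV v : cdepth (iV f v) = cdepth v.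
Proof. by rewrite -!dist_chain_tree dist_iV. Qed.

Lemma iV_cnode_level :
  exists phi : forall k, cS c k -> cS c' k, forall k x, iV f (cnode x) = cnode (phi k x).
Proof.
have iV_cnode k (x : cS c k) : exists y : cS c' k, iV f (cnode x) = cnode y.
  by apply: cdepth_cnode_inv; rewrite cdepth_iV.
exact: dependent_choice (fun k => dependent_choice (iV_cnode k)).
Qed.

Lemma iV_height0 : iV f (Some None) = Some None.
Proof. by have := cdepth_iV (Some None); case: (iV f _) => [[]|]. Qed.

Lemma chain_tiso_surj : exists h : chain_hom c c', chain_tiso h = f.
Proof.
have [phi phiE] := iV_cnode_level.
have phi_bij k : bijective (phi k).
  apply: inj_surj_bijective => [x y /(congr1 (@cnode _ c' k))|y].
    by rewrite -!phiE => /(@iV_inj _ _ f _ _) /cnode_inj.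
  have [v vy] := iV_surj f (cnode y).
  have [x vx] : exists x : cS c k, v = cnode x.
    by apply: cdepth_cnode_inv; rewrite -cdepth_iV vy.
  by exists x; apply: cnode_inj; rewrite -phiE -vx.
pose ph k := @Bij _ _ (phi k) (phi_bij k).
have ph_comm (k : 'I_n) (lt_k_n : k.+1 < n) (x : cS c (Ordinal lt_k_n)) :
    ph k (cp c lt_k_n x) = cp c' lt_k_n (ph (Ordinal lt_k_n) x).
  have fsrc := i_src f (Some (existT _ (Ordinal lt_k_n) x)).
  have ftgt := i_tgt f (Some (existT _ (Ordinal lt_k_n) x)).
  move: fsrc ftgt; rewrite [tsrc _ _]/= -/(cnode _) phiE => -[->].
  by rewrite !ttgt_node phiE => /cnode_inj.
exists (@ChainHom n c c' ph ph_comm); apply: tiso_eq => -[[[k x]|]|] /=.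
- by rewrite -/(cnode _) phiE.
- by rewrite iV_height0.
- by rewrite (i_root f).
Qed.
End ChainTreeIso.

Lemma chain_tiso_inj (c c' : chain n) : injective (@chain_tiso c c').
Proof.
move=> h h' hh'; apply: chain_hom_ext => k x; apply: (@cnode_inj _ c' k).
by have := congr1 (fun f : tiso (chain_tree c) (chain_tree c') => iV f (cnode x)) hh'.
Qed.

Lemma Psi_of_chain_fully_faithful : fully_faithful Psi_of_chain.
Proof.
by apply: fully_faithful_inj_surj => c c'; [apply: chain_tiso_inj | apply: chain_tiso_surj].
Qed.

Section LevelChain.
Variables (T : tree) (levelT : is_level n T).

Definition level_set (k : 'I_n) : finType := {v : tV T | dist v == k.+2}.

Lemma dist_parent_level (k : 'I_n) (lt_k_n : k.+1 < n) (x : level_set (Ordinal lt_k_n)) :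
  dist (parent (val x)) == k.+2.
Proof.
case: x => v /= /eqP dv.
have v_root : v != troot T by rewrite -dist0 dv.
by move: dv; rewrite dist_parent // => -[->].
Qed.

Definition level_chain : chain n :=
  @Chain n level_set (fun k lt_k_n x => exist _ (parent (val x)) (dist_parent_level x)).

Definition level_vert (v : cvert level_chain) : tV T :=
  match v with
  | None => troot T
  | Some None => root_child T
  | Some (Some u) => val (tagged u)
  end.

Definition level_edge (e : cedge level_chain) : tE T :=
  if e is Some u then out_edge (val (tagged u)) else root_edge T.

Lemma dist_level_vert v : dist (level_vert v) = cdepth v.
Proof.
case: v => [[[k x]|]|] /=; [exact: (eqP (valP x)) | | exact: dist_root].
by apply/eqP; rewrite dist_eq1.
Qed.

Lemma level_vert_inj : injective level_vert.
Proof.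
move=> v v' vv'; have := dist_level_vert v; rewrite vv' dist_level_vert.
case: v v' vv' => [[[k x]|]|] [[[k' x']|]|] //= xx' [/val_inj kk'].
by subst k'; congr (Some (Some (existT _ _ _))); apply: val_inj.
Qed.

Lemma level_vert_surj v : exists v', level_vert v' = v.
Proof.
case dv: (dist v) => [|[|d]].
- by exists None; apply/esym/eqP; rewrite -dist0 dv.
- by exists (Some None); apply/esym/eqP; rewrite -dist_eq1 dv.
have lt_d_n : d < n by have := dist_leq_level levelT v; rewrite dv.
have dv' : dist v == (Ordinal lt_d_n).+2 by rewrite dv.
by exists (@cnode _ level_chain (Ordinal lt_d_n) (exist _ v dv')).
Qed.

Lemma level_edge_src e : tsrc T (level_edge e) = level_vert (csrc e).
Proof. by case: e => [[k x]|] //=; apply: src_out_edge; rewrite -dist0 (eqP (valP x)). Qed.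

Lemma level_edge_tgt e : ttgt T (level_edge e) = level_vert (ctgt e).
Proof.
case: e => [[[[|m] lt_m_n] x]|] /=; [|by []|exact: tgt_root_edge].
have x_root : val x != troot T by rewrite -dist0 (eqP (valP x)).
by apply/eqP; rewrite -dist_eq1 -/(parent _) -eqSS -dist_parent //; apply: (valP x).
Qed.

Lemma level_edge_bij : bijective level_edge.
Proof.
apply: inj_surj_bijective => [e e' ee'|e'].
  by apply: Some_inj; apply: level_vert_inj; rewrite -!level_edge_src ee'.
have [[e|] ve] := level_vert_surj (tsrc T e'); last by move: (src_neq_root e'); rewrite -ve eqxx.
by exists e; apply: tsrc_inj; rewrite level_edge_src ve.
Qed.

Lemma level_vert_leaf v : v \in cleaves level_chain -> level_vert v \in tleaf T.
Proof. by rewrite (leaf_dist levelT) dist_level_vert; case: v => [[u|]|]; rewrite inE. Qed.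

Lemma level_vert_leaf_r v : level_vert v \in tleaf T -> v \in cleaves level_chain.
Proof.
rewrite (leaf_dist levelT) dist_level_vert inE.
by case: v => [[u|]|] //= /eqP [n0]; move: n_gt0; rewrite -n0.
Qed.

Definition level_tiso : tiso (chain_tree level_chain) T :=
  @TIso (chain_tree level_chain) T level_vert level_edge
    (inj_surj_bijective level_vert_inj level_vert_surj) level_edge_bij
    level_edge_src level_edge_tgt erefl level_vert_leaf level_vert_leaf_r.
End LevelChain.

Lemma Psi_of_chain_ess_surj : ess_surj Psi_of_chain.
Proof.
move=> T; exists (level_chain (ltr T)).
have [g [gf fg]] := tiso_inverse (level_tiso (llevel T)).
by exists (level_tiso (llevel T)), g.
Qed.
End ChainTreeFunctor.

Lemma cat_equiv_Psi_Sigma_star_iter n : 0 < n -> cat_equiv (Psi n) (Sigma_star_iter n).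
Proof.
move=> n_gt0; apply: (@cat_equiv_fully_faithful_ess_surj _ _ (Psi_of_chain n_gt0)).
- exact: Psi_category.
- exact: is_functor_Psi_of_chain.
- exact: Psi_of_chain_fully_faithful.
- exact: Psi_of_chain_ess_surj.
Qed.

Lemma tdec_eq (A : Cat) n (X : dtree A n) v w (vw : v = w) (v_leaf : v \in tleaf (ltr (dt X)))
  (w_leaf : w \in tleaf (ltr (dt X))) : tdec X v_leaf = tdec X w_leaf.
Proof. by subst w; rewrite (bool_irrelevance v_leaf w_leaf). Qed.

Lemma ddec_eq (A : Cat) n (X : dchain A n) (k : 'I_n) (p q : k.+1 == n) (x y : cS (dc X) k) :
  x = y -> ddec X k p x = ddec X k q y.
Proof. by move=> ->; rewrite (bool_irrelevance p q). Qed.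

Lemma dtree_hom_ext (A : Cat) n (X Y : dtree A n) (f g : dtree_hom X Y) :
  tmor_iso f = tmor_iso g ->
  (forall v v_leaf (E1 : @tdec _ _ X v v_leaf = tdec X v_leaf)
     (E2 : tdec Y (i_leaf (tmor_iso f) v_leaf) = tdec Y (i_leaf (tmor_iso g) v_leaf)),
     hom_cast E1 E2 (tmor f v_leaf) = tmor g v_leaf) -> f = g.
Proof.
case: f g => [i m] [i' m'] /= ii'; subst i' => mm'.
f_equal; apply: functional_extensionality_dep => v.
by apply: functional_extensionality_dep => v_leaf; rewrite -(mm' v v_leaf erefl erefl).
Qed.

Lemma dchain_hom_ext (A : Cat) n (X Y : dchain A n) (f g : dchain_hom X Y) :
  dphi f = dphi g ->
  (forall k p x (E1 : ddec X k p x = ddec X k p x)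
     (E2 : ddec Y k p (cphi (dphi f) k x) = ddec Y k p (cphi (dphi g) k x)),
     hom_cast E1 E2 (dmor f k p x) = dmor g k p x) -> f = g.
Proof.
case: f g => [i m] [i' m'] /= ii'; subst i' => mm'.
f_equal; apply: functional_extensionality_dep => k.
apply: functional_extensionality_dep => p; apply: functional_extensionality_dep => x.
by rewrite -(mm' k p x erefl erefl).
Qed.

Lemma Psi_wr_category n (A : Cat) : is_category A -> is_category (Psi_wr n A).
Proof.
case=> idl idr asc; split => *;
  by apply: dtree_hom_ext => [|v v_leaf E1 E2]; [apply: tiso_ext | rewrite hom_castK /=].
Qed.

Section DecoratedChainTree.
Variables (A : Cat) (n : nat) (n_gt0 : 0 < n).

Lemma cleaf_top (c : chain n) (k : 'I_n) (x : cS c k) : cnode x \in cleaves c -> k.+1 == n.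
Proof. by rewrite inE. Qed.

Lemma croot_leafF (c : chain n) : None \in cleaves c -> False.
Proof. by rewrite inE. Qed.

Lemma height0_leafF (c : chain n) : Some None \in cleaves c -> False.
Proof. by rewrite inE. Qed.

Definition chain_dec (X : dchain A n) : forall v : cvert (dc X), v \in cleaves (dc X) -> ob A :=
  fun v => match v with
  | Some (Some (existT k x)) => fun v_leaf => ddec X k (cleaf_top v_leaf) x
  | Some None => fun v_leaf => False_rect _ (height0_leafF v_leaf)
  | None => fun v_leaf => False_rect _ (croot_leafF v_leaf)
  end.

Definition dtree_of_dchain (X : dchain A n) : dtree A n :=
  @DTree A n (ltree_of (chain_tree_level (dc X) n_gt0)) (@chain_dec X).

Definition chain_dec_hom (X Y : dchain A n) (h : dchain_hom X Y) :
  forall v (v_leaf : v \in cleaves (dc X)),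
    hom (chain_dec v_leaf) (chain_dec (cvert_map_leaf (dphi h) v_leaf)) :=
  fun v => match v with
  | Some (Some (existT k x)) => fun v_leaf =>
      hom_cast erefl (@ddec_eq _ _ Y _ (cleaf_top v_leaf)
                       (cleaf_top (cvert_map_leaf (dphi h) v_leaf)) _ _ erefl)
        (dmor h k (cleaf_top v_leaf) x)
  | Some None => fun v_leaf => False_rect _ (height0_leafF v_leaf)
  | None => fun v_leaf => False_rect _ (croot_leafF v_leaf)
  end.

Definition dtree_hom_of_dchain (X Y : dchain A n) (h : dchain_hom X Y) :
  dtree_hom (dtree_of_dchain X) (dtree_of_dchain Y) :=
  @DTreeHom A n (dtree_of_dchain X) (dtree_of_dchain Y) (chain_tiso (dphi h))
    (@chain_dec_hom X Y h).

Definition Psi_wr_of_chain : Functor (Sigma_star_iter_wr n A) (Psi_wr n A) :=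
  @Functor_ (Sigma_star_iter_wr n A) (Psi_wr n A) dtree_of_dchain dtree_hom_of_dchain.

Lemma dmor_irr (X Y : dchain A n) (h : dchain_hom X Y) (k : 'I_n) (p q : k.+1 == n) x :
  dmor h k p x = hom_cast (@ddec_eq _ _ X k q p x x erefl) (@ddec_eq _ _ Y k q p _ _ erefl)
                          (dmor h k q x).
Proof.
move: (@ddec_eq _ _ X k q p x x erefl) (@ddec_eq _ _ Y k q p _ _ erefl).
by rewrite (bool_irrelevance p q) => E1 E2; rewrite hom_castK.
Qed.

Lemma is_functor_Psi_wr_of_chain : is_functor Psi_wr_of_chain.
Proof.
have [fid fcomp] := is_functor_Psi_of_chain n_gt0.
split => [X|X Y Z g f].
- apply: dtree_hom_ext => [|v v_leaf E1 E2]; first exact: (fid (dc X)).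
  case: v v_leaf E1 E2 => [[[k x]|]|] v_leaf E1 E2; last by case: (croot_leafF v_leaf).
    by cbn -[hom_cast]; rewrite hom_cast_trans hom_cast_id.
  by case: (height0_leafF v_leaf).
- apply: dtree_hom_ext => [|v v_leaf E1 E2]; first exact: (fcomp _ _ _ (dphi g) (dphi f)).
  case: v v_leaf E1 E2 => [[[k x]|]|] v_leaf E1 E2; last by case: (croot_leafF v_leaf).
    cbn -[hom_cast].
    rewrite (dmor_irr g (cleaf_top (cvert_map_leaf (dphi f) v_leaf)) (cleaf_top v_leaf)).
    by rewrite [in RHS]hom_cast_trans hom_cast_comp hom_cast_trans; apply: hom_cast_irr.
  by case: (height0_leafF v_leaf).
Qed.

Lemma cnode_leaf (c : chain n) (k : 'I_n) (x : cS c k) : k.+1 == n -> cnode x \in cleaves c.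
Proof. by rewrite inE. Qed.

Lemma tmor_irr (X Y : dtree A n) (f : dtree_hom X Y) v (v_leaf v_leaf' : v \in tleaf (ltr (dt X)))
  (E1 : tdec X v_leaf' = tdec X v_leaf)
  (E2 : tdec Y (i_leaf (tmor_iso f) v_leaf') = tdec Y (i_leaf (tmor_iso f) v_leaf)) :
  hom_cast E1 E2 (tmor f v_leaf') = tmor f v_leaf.
Proof. by move: E1 E2; rewrite (bool_irrelevance v_leaf' v_leaf) => E1 E2; rewrite hom_castK. Qed.

Lemma DTreeHom_inj (X Y : dtree A n) i t t' :
  @DTreeHom A n X Y i t = @DTreeHom A n X Y i t' -> t = t'.
Proof. by case; apply: inj_pair2. Qed.

Lemma Psi_wr_of_chain_inj (X Y : dchain A n) : injective (@fmap _ _ Psi_wr_of_chain X Y).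
Proof.
move=> h h' hh'.
have phi_eq : dphi h = dphi h' by apply: chain_tiso_inj; apply: (congr1 (@tmor_iso _ _ _ _) hh').
case: h h' hh' phi_eq => p m [p' m'] /= hh' pp'; subst p'; f_equal.
move: hh'; rewrite /dtree_hom_of_dchain /= => /DTreeHom_inj mm'.
apply: functional_extensionality_dep => k; apply: functional_extensionality_dep => top.
apply: functional_extensionality_dep => x.
have := equal_f_dep (equal_f_dep mm' (cnode x)) (cnode_leaf x top); cbn -[hom_cast].
rewrite (bool_irrelevance (cleaf_top (cnode_leaf x top)) top).
by move=> /hom_cast_sym; rewrite hom_cast_trans => ->; rewrite hom_castK.
Qed.

Lemma Psi_wr_of_chain_surj (X Y : dchain A n)
    (f : dtree_hom (dtree_of_dchain X) (dtree_of_dchain Y)) :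
  exists h : dchain_hom X Y, dtree_hom_of_dchain h = f.
Proof.
have [p pf] := chain_tiso_surj (tmor_iso f).
have iV_f k (x : cS (dc X) k) : iV (tmor_iso f) (cnode x) = cnode (cphi p k x) by rewrite -pf.
have decX (k : 'I_n) (top : k.+1 == n) (x : cS (dc X) k) :
    tdec (dtree_of_dchain X) (cnode_leaf x top) = ddec X k top x.
  exact: ddec_eq.
have decY (k : 'I_n) (top : k.+1 == n) (x : cS (dc X) k) :
    tdec (dtree_of_dchain Y) (i_leaf (tmor_iso f) (cnode_leaf x top)) = ddec Y k top (cphi p k x).
  rewrite (tdec_eq (iV_f k x) _ (cnode_leaf (cphi p k x) top)).
  exact: ddec_eq.
exists (@DChainHom A n X Y p
  (fun k top x => hom_cast (decX k top x) (decY k top x) (tmor f (cnode_leaf x top)))).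
apply: dtree_hom_ext => [|v v_leaf E1 E2]; first exact: pf.
case: v v_leaf E1 E2 => [[[k x]|]|] v_leaf E1 E2; last by case: (croot_leafF v_leaf).
  cbn -[hom_cast]; rewrite !hom_cast_trans.
  exact: (@tmor_irr _ _ f _ v_leaf (cnode_leaf x (cleaf_top v_leaf))).
by case: (height0_leafF v_leaf).
Qed.

Lemma Psi_wr_of_chain_fully_faithful : fully_faithful Psi_wr_of_chain.
Proof.
apply: fully_faithful_inj_surj => X Y.
  exact: Psi_wr_of_chain_inj.
exact: Psi_wr_of_chain_surj.
Qed.
End DecoratedChainTree.

Section DecoratedLevelChain.
Variables (A : Cat) (catA : is_category A) (n : nat) (n_gt0 : 0 < n) (X : dtree A n).
Local Notation T := (ltr (dt X)).
Local Notation levelT := (llevel (dt X)).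

Lemma level_set_leaf (k : 'I_n) (top : k.+1 == n) (x : level_set T k) : val x \in tleaf T.
Proof. by rewrite (leaf_dist levelT) (eqP (valP x)) eqSS. Qed.

Definition level_dchain : dchain A n :=
  @DChain A n (level_chain n T) (fun k top x => tdec X (level_set_leaf top x)).

Lemma chain_dec_level v (v_leaf : v \in cleaves (level_chain n T)) w (w_leaf : w \in tleaf T) :
  level_vert v = w -> @chain_dec A n level_dchain v v_leaf = tdec X w_leaf.
Proof.
case: v v_leaf => [[[k x]|]|] v_leaf; last by case: (croot_leafF v_leaf).
  by move=> xw; apply: tdec_eq.
by case: (height0_leafF v_leaf).
Qed.

Definition level_dtree_hom : dtree_hom (dtree_of_dchain n_gt0 level_dchain) X :=
  @DTreeHom A n (dtree_of_dchain n_gt0 level_dchain) X (level_tiso n_gt0 levelT)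
    (fun v v_leaf => hom_cast erefl (chain_dec_level v_leaf (level_vert_leaf levelT v_leaf) erefl)
                       (idm _)).

Lemma dtree_of_level_dchain_iso :
  @isomorphic (Psi_wr n A) (dtree_of_dchain n_gt0 level_dchain) X.
Proof.
have [g [gf fg]] := tiso_inverse (level_tiso n_gt0 levelT).
have level_g w : level_vert (iV g w) = w by have := congr1 (fun f => iV f w) fg.
pose g_mor w (w_leaf : w \in tleaf T) :=
  hom_cast erefl (esym (chain_dec_level (i_leaf g w_leaf) w_leaf (level_g w))) (idm _).
exists level_dtree_hom, (@DTreeHom A n X (dtree_of_dchain n_gt0 level_dchain) g g_mor); split.
- apply: dtree_hom_ext => [|v v_leaf E1 E2]; first exact: gf.
  by cbn -[hom_cast]; rewrite hom_cast_id_comp // hom_cast_trans hom_cast_id.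
- apply: dtree_hom_ext => [|w w_leaf E1 E2]; first exact: fg.
  by cbn -[hom_cast]; rewrite hom_cast_id_comp // hom_cast_trans hom_cast_id.
Qed.
End DecoratedLevelChain.

Lemma Psi_wr_of_chain_ess_surj (A : Cat) n (n_gt0 : 0 < n) (catA : is_category A) :
  ess_surj (Psi_wr_of_chain A n_gt0).
Proof. by move=> X; exists (level_dchain X); apply: dtree_of_level_dchain_iso. Qed.

Lemma cat_equiv_Psi_wr_Sigma_star_iter_wr (A : Cat) n : is_category A -> 0 < n ->
  cat_equiv (Psi_wr n A) (Sigma_star_iter_wr n A).
Proof.
move=> catA n_gt0; apply: (@cat_equiv_fully_faithful_ess_surj _ _ (Psi_wr_of_chain A n_gt0)).
- exact: Psi_wr_category.
- exact: is_functor_Psi_wr_of_chain.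
- exact: Psi_wr_of_chain_fully_faithful.
- exact: Psi_wr_of_chain_ess_surj.
Qed.

Definition chain1 (S : finType) : chain 1 := @Chain 1 (fun _ => S) (fun k lt_k_1 x => x).

Definition chain1_hom (S S' : finType) (f : bij S S') : chain_hom (chain1 S) (chain1 S') :=
  @ChainHom 1 (chain1 S) (chain1 S') (fun _ => f) (fun k lt_k_1 x => erefl).

Definition chain1_functor : Functor Sigma_star (Sigma_star_iter 1) :=
  @Functor_ Sigma_star (Sigma_star_iter 1) chain1 chain1_hom.

Lemma is_functor_chain1 : is_functor chain1_functor.
Proof. by split => *; apply: chain_hom_ext. Qed.

Lemma chain1_fully_faithful : fully_faithful chain1_functor.
Proof.
apply: fully_faithful_inj_surj => [S S' f f' ff'|S S' h].
  apply: bij_ext => x.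
  exact: (congr1 (fun h : chain_hom (chain1 S) (chain1 S') => cphi h ord0 x) ff').
by exists (cphi h ord0); apply: chain_hom_ext => k x; rewrite /= (ord1 k).
Qed.

Definition ord1_bij (d : chain 1) (k : 'I_1) (e : ord0 = k) : bij (cS d ord0) (cS d k) :=
  match e in _ = k' return bij (cS d ord0) (cS d k') with erefl => bij_idm _ end.

Definition ord1_bij_inv (d : chain 1) (k : 'I_1) (e : ord0 = k) : bij (cS d k) (cS d ord0) :=
  match e in _ = k' return bij (cS d k') (cS d ord0) with erefl => bij_idm _ end.

Lemma ord1_bijK d k (e : ord0 = k) : cancel (ord1_bij d e) (ord1_bij_inv d e).
Proof. by case: k / e. Qed.

Lemma ord1_bij_invK d k (e : ord0 = k) : cancel (ord1_bij_inv d e) (ord1_bij d e).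
Proof. by case: k / e. Qed.

(* A chain of length 1 has no maps, so naturality holds vacuously. *)
Definition chain1_to (d : chain 1) : chain_hom (chain1 (cS d ord0)) d :=
  @ChainHom 1 (chain1 (cS d ord0)) d (fun k => ord1_bij d (esym (ord1 k)))
    (fun k lt_k_1 x => False_ind _ (notF lt_k_1)).

Definition chain1_from (d : chain 1) : chain_hom d (chain1 (cS d ord0)) :=
  @ChainHom 1 d (chain1 (cS d ord0)) (fun k => ord1_bij_inv d (esym (ord1 k)))
    (fun k lt_k_1 x => False_ind _ (notF lt_k_1)).

Lemma chain1_ess_surj : ess_surj chain1_functor.
Proof.
move=> d; exists (cS d ord0), (chain1_to d), (chain1_from d).
by split; apply: chain_hom_ext => k x /=; rewrite ?ord1_bijK ?ord1_bij_invK.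
Qed.

Lemma cat_equiv_Psi1_Sigma_star : cat_equiv (Psi 1) Sigma_star.
Proof.
apply: (@cat_equiv_comp _ _ _ (Psi_of_chain (ltn0Sn 0)) chain1_functor).
- exact: Psi_category.
- exact: is_functor_Psi_of_chain.
- exact: Psi_of_chain_fully_faithful.
- exact: Psi_of_chain_ess_surj.
- exact: is_functor_chain1.
- exact: chain1_fully_faithful.
- exact: chain1_ess_surj.
Qed.

Section DecoratedChain1.
Variables (A : Cat) (catA : is_category A).

Definition dchain1 (X : fam A) : dchain A 1 :=
  @DChain A 1 (chain1 (fS X)) (fun k top x => fA X x).

Definition dchain1_hom (X Y : fam A) (f : fam_hom X Y) : dchain_hom (dchain1 X) (dchain1 Y) :=
  @DChainHom A 1 (dchain1 X) (dchain1 Y) (chain1_hom (fsig f)) (fun k top x => fmor f x).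

Definition dchain1_functor : Functor (Sigma_star_wr A) (Sigma_star_iter_wr 1 A) :=
  @Functor_ (Sigma_star_wr A) (Sigma_star_iter_wr 1 A) dchain1 dchain1_hom.

Lemma is_functor_dchain1 : is_functor dchain1_functor.
Proof.
by split => *;
  (apply: dchain_hom_ext => [|k top x E1 E2]; [apply: chain_hom_ext | rewrite hom_castK]).
Qed.

Lemma fam_hom_ext (X Y : fam A) (f g : fam_hom X Y) :
  fsig f = fsig g ->
  (forall t (E : fA Y (fsig f t) = fA Y (fsig g t)), hom_cast erefl E (fmor f t) = fmor g t) ->
  f = g.
Proof.
case: f g => [s m] [s' m'] /= ss'; subst s' => mm'; f_equal.
by apply: functional_extensionality_dep => t; rewrite -(mm' t erefl).
Qed.

Lemma DChainHom_inj n (X Y : dchain A n) i t t' :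
  @DChainHom A n X Y i t = @DChainHom A n X Y i t' -> t = t'.
Proof. by case; apply: inj_pair2. Qed.

Lemma dchain1_inj (X Y : fam A) : injective (@dchain1_hom X Y).
Proof.
move=> f f' ff'.
have ss' : fsig f = fsig f'.
  apply: bij_ext => x.
  exact: (congr1 (fun h : dchain_hom (dchain1 X) (dchain1 Y) => cphi (dphi h) ord0 x) ff').
apply: fam_hom_ext => // t E; case: f f' ff' ss' E => s m [s' m'] /= ff' ss' E; subst s'.
have := equal_f_dep (equal_f_dep (equal_f_dep (DChainHom_inj ff') ord0) isT) t.
by move=> /= <-; rewrite (proof_irrelevance _ E erefl).
Qed.

Lemma dchain1_surj (X Y : fam A) (h : dchain_hom (dchain1 X) (dchain1 Y)) :
  exists f, dchain1_hom f = h.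
Proof.
exists (@FamHom A X Y (cphi (dphi h) ord0) (fun t => dmor h ord0 isT t)).
apply: dchain_hom_ext => [|k top x E1 E2].
  by apply: chain_hom_ext => k x /=; rewrite (ord1 k).
move: top x E1 E2; rewrite (ord1 k) => top x E1 E2.
by move: E1 E2; rewrite (bool_irrelevance top isT) => E1 E2; rewrite hom_castK.
Qed.

Lemma dchain1_fully_faithful : fully_faithful dchain1_functor.
Proof. by apply: fully_faithful_inj_surj => X Y; [apply: dchain1_inj | apply: dchain1_surj]. Qed.

Lemma ddec_ord1_bij (d : dchain A 1) (k : 'I_1) (e : ord0 = k) (top : k.+1 == 1) x :
  ddec d ord0 isT x = ddec d k top (ord1_bij (dc d) e x).
Proof. by move: top; case: k / e => top; apply: ddec_eq. Qed.

Lemma ddec_ord1_bij_inv (d : dchain A 1) (k : 'I_1) (e : ord0 = k) (top : k.+1 == 1) x :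
  ddec d k top x = ddec d ord0 isT (ord1_bij_inv (dc d) e x).
Proof. by move: top x; case: k / e => top x; apply: ddec_eq. Qed.

Definition dchain_fam (d : dchain A 1) : fam A := @Fam A (cS (dc d) ord0) (ddec d ord0 isT).

Definition dchain1_to (d : dchain A 1) : dchain_hom (dchain1 (dchain_fam d)) d :=
  @DChainHom A 1 (dchain1 (dchain_fam d)) d (chain1_to (dc d))
    (fun k top x => hom_cast erefl (ddec_ord1_bij (esym (ord1 k)) top x) (idm _)).

Definition dchain1_from (d : dchain A 1) : dchain_hom d (dchain1 (dchain_fam d)) :=
  @DChainHom A 1 d (dchain1 (dchain_fam d)) (chain1_from (dc d))
    (fun k top x => hom_cast erefl (ddec_ord1_bij_inv (esym (ord1 k)) top x) (idm _)).

Lemma dchain1_ess_surj : ess_surj dchain1_functor.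
Proof.
move=> d; exists (dchain_fam d), (dchain1_to d), (dchain1_from d).
split; apply: dchain_hom_ext => [|k top x E1 E2].
- by apply: chain_hom_ext => k x /=; rewrite ord1_bijK.
- by rewrite /= hom_cast_id_comp // hom_cast_trans hom_cast_id.
- by apply: chain_hom_ext => k x /=; rewrite ord1_bij_invK.
- by rewrite /= hom_cast_id_comp // hom_cast_trans hom_cast_id.
Qed.
End DecoratedChain1.

Lemma cat_equiv_Psi1_wr_Sigma_star_wr (A : Cat) :
  is_category A -> cat_equiv (Psi_wr 1 A) (Sigma_star_wr A).
Proof.
move=> catA; apply: (@cat_equiv_comp _ _ _ (Psi_wr_of_chain A (ltn0Sn 0)) (dchain1_functor A)).
- exact: Psi_wr_category.
- exact: is_functor_Psi_wr_of_chain.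
- exact: Psi_wr_of_chain_fully_faithful.
- exact: Psi_wr_of_chain_ess_surj.
- exact: is_functor_dchain1.
- exact: dchain1_fully_faithful.
- exact: dchain1_ess_surj.
Qed.

Theorem proposition2p13 :
  forall (A : Cat), is_category A ->
  forall n : nat, 1 <= n ->
    [/\ cat_equiv (Psi 1) Sigma_star,
        cat_equiv (Psi_wr 1 A) (Sigma_star_wr A),
        cat_equiv (Psi n) (Sigma_star_iter n) &
        cat_equiv (Psi_wr n A) (Sigma_star_iter_wr n A)].
Proof.
move=> A catA n n_gt0; split.
- exact: cat_equiv_Psi1_Sigma_star.
- exact: cat_equiv_Psi1_wr_Sigma_star_wr.
- exact: cat_equiv_Psi_Sigma_star_iter.
- exact: cat_equiv_Psi_wr_Sigma_star_iter_wr.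
Qed.
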